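(* For every integer $0\le t<(q+1)/d$, the number $l(t,0)$ of polynomials $L\in\mathbb F_{q^2}[X]$ with $\deg L=t$, $\tilde L=L$ and $\gcd(L,X^{(q+1)/d}-1)=1$ equals $$l(t,0)=(q^2-1)\sum_{i=0}^{t-1}(-1)^i\binom{(q+1)/d}{i}q^{t-i-1}+(-1)^t(q-1)\binom{(q+1)/d}{t}.$$
   Context: $q$ is a prime power and $d$ is a positive divisor of $q+1$. For $a\in\mathbb F_{q^2}$, $\bar a=a^q$; for $f(X)=\sum_{i=0}^n a_iX^i\in\mathbb F_{q^2}[X]$ with $a_n\neq0$, $\tilde f(X)=\sum_{i=0}^n\bar a_iX^{n-i}$. *)

From HB Require Import structures.
From mathcomp Require Import all_boot all_order all_algebra.
Set Implicit Arguments. Unset Strict Implicit. Unset Printing Implicit Defensive.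
Import GRing.Theory.
Local Open Scope ring_scope.

Definition qconj (F : finFieldType) (q : nat) (a : F) : F := a ^+ q.

(* tilde f (X) = sum_{i=0}^n bar(a_i) X^(n-i), n = deg f; i.e. the coefficient
   of X^i in tilde f is bar(a_{n-i}). For f = 0 this gives 0. *)
Definition conj_recip (F : finFieldType) (q : nat) (f : {poly F}) : {poly F} :=
  \poly_(i < size f) qconj q f`_((size f).-1 - i).

(* Polynomials of degree <= t are
   enumerated by their coefficient vectors (a_0,...,a_t). *)
Definition count_l (F : finFieldType) (q m t : nat) : nat :=
  #|[set c : {ffun 'I_t.+1 -> F} |
      let L := \poly_(i < t.+1) c (inord i) in
      [&& size L == t.+1, conj_recip q L == L & coprimep L ('X^m - 1)]]|.

From HB Require Import structures.
From mathcomp Require Import all_boot all_order all_algebra.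
From mathcomp Require Import cyclic finfield.
From mathcomp Require Import zify ring.
Import GRing.Theory.
Set Implicit Arguments. Unset Strict Implicit. Unset Printing Implicit Defensive.
Local Open Scope ring_scope.

(* Call L "scr" when
   tilde L = L.  The proof is an inclusion-exclusion over the m distinct
   roots z of X^m - 1, all of which satisfy z^(q+1) = 1.
   - Polynomials of degree <= n are encoded by coefficient vectors; a
     bijection of polynomial classes transfers to a bijection of vector sets.
   - Since x |-> x^(q-1) maps F^* onto the (q+1)-th roots of unity, for such
     a z there is c <> 0 with c^(q-1) = -z; then M |-> c (X - z) M is a
     bijection from scr polynomials of degree t onto scr polynomials of
     degree t+1 vanishing at z.
   - Hence, if N(s,t) counts scr polynomials of degree t with no root in the
     list s, N(s,t+1) = N(z::s,t+1) + N(s,t), which by induction on s gives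
     N(s,t) = sum_i (-1)^i C(|s|,i) N([::], t-i).
   - Finally N([::],0) = q-1 and N([::],t+1) = (q^2-1) q^t, by counting the
     "palindromic" coefficient vectors (bar c_(t-i) = c_i) via their first
     half, and coprimality with X^m - 1 means having no root among its roots. *)

Section CoefficientVectors.
Variable R : finNzRingType.

Definition poly_of_vec {n} (c : {ffun 'I_n.+1 -> R}) : {poly R} :=
  \poly_(i < n.+1) c (inord i).

Definition vec_of_poly n (p : {poly R}) : {ffun 'I_n.+1 -> R} :=
  [ffun i : 'I_n.+1 => p`_i].

Lemma poly_of_vecK n (p : {poly R}) :
  (size p <= n.+1)%N -> poly_of_vec (vec_of_poly n p) = p.
Proof.
move=> sp; apply/polyP => k; rewrite coef_poly; case: ltnP => kn.
  by rewrite ffunE inordK.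
by rewrite nth_default // (leq_trans sp kn).
Qed.

Lemma vec_of_polyK n (c : {ffun 'I_n.+1 -> R}) : vec_of_poly n (poly_of_vec c) = c.
Proof. by apply/ffunP => i; rewrite ffunE coef_poly ltn_ord inord_val. Qed.

Lemma size_poly_of_vec n (c : {ffun 'I_n.+1 -> R}) :
  (size (poly_of_vec c) == n.+1) = (c ord_max != 0).
Proof.
have top : inord n = ord_max :> 'I_n.+1 by apply: val_inj; rewrite /= inordK.
apply/eqP/idP => [sz | cn].
  have : lead_coef (poly_of_vec c) != 0 by rewrite lead_coef_eq0 -size_poly_eq0 sz.
  by rewrite /lead_coef sz /= coef_poly ltnSn top.
by apply: size_poly_eq; rewrite top.
Qed.

Definition vecs_of_size n (Q : pred {poly R}) : {set {ffun 'I_n.+1 -> R}} :=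
  [set c | (size (poly_of_vec c) == n.+1) && Q (poly_of_vec c)].

Lemma card_vecs_of_size_bij n m (Q1 Q2 : pred {poly R}) (h : {poly R} -> {poly R}) :
  injective h ->
  (forall p : {poly R}, size p = n.+1 -> Q1 p -> size (h p) = m.+1 /\ Q2 (h p)) ->
  (forall p' : {poly R}, size p' = m.+1 -> Q2 p' ->
    exists2 p : {poly R}, size p = n.+1 /\ Q1 p & h p = p') ->
  #|vecs_of_size n Q1| = #|vecs_of_size m Q2|.
Proof.
move=> h_inj h_into h_onto.
pose phi (c : {ffun 'I_n.+1 -> R}) := vec_of_poly m (h (poly_of_vec c)).
have sz_h c : c \in vecs_of_size n Q1 -> size (h (poly_of_vec c)) = m.+1 /\ Q2 (h (poly_of_vec c)).
  by rewrite inE => /andP [/eqP sz q1]; apply: h_into.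
have -> : vecs_of_size m Q2 = phi @: vecs_of_size n Q1.
  apply/setP => c'; rewrite inE; apply/idP/imsetP => [/andP [/eqP sz q2] | [c cQ ->]].
    have [p [sp q1] hp] := h_onto _ sz q2.
    exists (vec_of_poly n p); first by rewrite inE poly_of_vecK ?sp ?eqxx.
    by rewrite /phi poly_of_vecK ?sp // hp vec_of_polyK.
  have [sz q2] := sz_h c cQ.
  by rewrite /phi poly_of_vecK sz ?eqxx.
apply/esym/card_in_imset => c1 c2 c1Q c2Q /(congr1 poly_of_vec).
have [s1 _] := sz_h c1 c1Q; have [s2 _] := sz_h c2 c2Q.
rewrite /phi !poly_of_vecK ?s1 ?s2 // => /h_inj /(congr1 (vec_of_poly n)).
by rewrite !vec_of_polyK.
Qed.

End CoefficientVectors.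

Lemma finField_prim_root (F : finFieldType) : exists g : F, #|F|.-1.-primitive_root g.
Proof.
have units_card : #|[pred x : F | x != 0]| = #|F|.-1.
  by rewrite -(cardC1 (0 : F)); apply: eq_card => x; rewrite !inE.
have : has #|F|.-1.-primitive_root (enum [pred x : F | x != 0]).
  apply: has_prim_root.
  - by rewrite -units_card; apply/card_gt0P; exists 1; rewrite inE oner_eq0.
  - apply/allP => x; rewrite mem_enum inE => x0.
    rewrite unity_rootE; apply/eqP; apply: (mulIf x0).
    by rewrite -exprSr prednK ?expf_card ?mul1r //; apply/card_gt0P; exists x.
  - exact: enum_uniq.
  - by rewrite -cardE units_card.
by case/hasP => g _; exists g.
Qed.

Lemma Xn_sub1_split (F : finFieldType) n : (n %| #|F|.-1)%N ->
  exists s : seq F, [/\ uniq s, size s = n, 'X^n - 1 = \prod_(z <- s) ('X - z%:P)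
    & forall z, z \in s -> exists2 c, c != 0 & c ^+ (#|F|.-1 %/ n) = z].
Proof.
move=> nN; have [g prim_g] := finField_prim_root F; set N := #|F|.-1 in nN prim_g *.
have prim_gn := dvdn_prim_root prim_g nN.
exists [seq (g ^+ (N %/ n)) ^+ i | i <- iota 0 n]; split.
- rewrite map_inj_in_uniq ?iota_uniq // => i j; rewrite !mem_iota !add0n => ilt jlt.
  by move/eqP; rewrite (eq_prim_root_expr prim_gn) !modn_small // => /eqP.
- by rewrite size_map size_iota.
- by rewrite big_map -(factor_Xn_sub_1 prim_gn) /index_iota subn0.
move=> z /mapP [i _ ->]; exists (g ^+ i); last by rewrite exprAC.
by rewrite expf_neq0 // (prim_root_eq0 prim_g) -lt0n (prim_order_gt0 prim_g).
Qed.

Lemma predn_exp2 n : (n ^ 2).-1 = (n.-1 * n.+1)%N.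
Proof. by case: n => // n; rewrite mulnS -subn1 /=; nia. Qed.

Lemma coprimep_prod_XsubC (F : fieldType) (L : {poly F}) (s : seq F) :
  coprimep L (\prod_(z <- s) ('X - z%:P)) = all (fun z => ~~ root L z) s.
Proof.
elim: s => [|z s IH]; first by rewrite big_nil coprimep1.
by rewrite big_cons coprimepMr coprimep_XsubC IH.
Qed.

Section ConjugateReciprocal.
Variables (F : finFieldType) (q : nat).
Hypothesis q_pow : exists p k : nat, [/\ prime p, (0 < k)%N & q = (p ^ k)%N].
Hypothesis cardF : #|F| = (q ^ 2)%N.

Local Notation bar := (@qconj F q).

Lemma q_gt1 : (1 < q)%N.
Proof.
case: q_pow => p [[|k] [p_pr // _ ->]]; rewrite expnS.
by rewrite (leq_trans (prime_gt1 p_pr)) // leq_pmulr // expn_gt0 prime_gt0.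
Qed.

(* F has characteristic p, so x |-> x^q is additive. *)
Lemma qconjD (a b : F) : bar (a + b) = bar a + bar b.
Proof.
case: q_pow => p [k [p_pr _ qE]]; rewrite /qconj qE.
have pF : p \in [pchar F] by apply: (@card_finPcharP F p (k * 2)); rewrite // cardF qE expnM.
by apply: exprDn_pchar; rewrite pnatX pnatE ?pF.
Qed.

Lemma qconj0 : bar 0 = 0.
Proof. by rewrite /qconj expr0n; case: q q_gt1. Qed.

Lemma qconjM (a b : F) : bar (a * b) = bar a * bar b.
Proof. exact: exprMn. Qed.

Lemma qconjK (a : F) : bar (bar a) = a.
Proof. by rewrite /qconj -exprM mulnn -cardF expf_card. Qed.

Lemma qconjN (a : F) : bar (- a) = - bar a.
Proof. by apply/eqP; rewrite -subr_eq0 opprK addrC -qconjD subrr qconj0. Qed.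

Lemma qconjB (a b : F) : bar (a - b) = bar a - bar b.
Proof. by rewrite qconjD qconjN. Qed.

Lemma qconj_eq0 (a : F) : (bar a == 0) = (a == 0).
Proof. by rewrite /qconj expf_eq0; case: q q_gt1. Qed.

(* The fixed field of conjugation, F_q, consists of 0 and the q - 1 roots of
   X^(q-1) - 1. *)
Lemma card_qconj_fixed : #|[pred x : F | bar x == x]| = q.
Proof.
have dvd_qm1 : (q.-1 %| #|F|.-1)%N by rewrite cardF predn_exp2 dvdn_mulr.
have [s [s_uniq s_size sE _]] := Xn_sub1_split dvd_qm1.
have s0 : 0 \notin s.
  rewrite -root_prod_XsubC -sE rootE !hornerE expr0n -subn1 subn_eq0 leqNgt q_gt1.
  by rewrite sub0r oppr_eq0 oner_eq0.
suff -> : #|[pred x : F | bar x == x]| = #|[predU1 0 & s]|.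
  by rewrite cardU1 s0 (card_uniqP s_uniq) s_size add1n prednK // ltnW // q_gt1.
apply: eq_card => x; rewrite !inE.
have [->|x0] := eqVneq x 0; first by rewrite qconj0 eqxx.
rewrite /= -root_prod_XsubC -sE rootE !hornerE subr_eq0 /qconj.
rewrite -{1}(prednK (ltnW q_gt1)) exprSr.
by apply/eqP/eqP => [xq | ->]; [apply: (mulIf x0); rewrite mul1r | rewrite mul1r].
Qed.

Lemma card_qconj_fixed_units : #|[pred x : F | (x != 0) && (bar x == x)]| = q.-1.
Proof.
rewrite -(congr1 predn card_qconj_fixed) [in RHS](cardD1 0) [in RHS]inE qconj0 eqxx.
by apply: eq_card => x; rewrite !inE.
Qed.

Lemma qm1_power_onto (w : F) : w ^+ q.+1 = 1 -> exists2 c : F, c != 0 & c ^+ q.-1 = w.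
Proof.
move=> w1.
have dvd_qp1 : (q.+1 %| #|F|.-1)%N by rewrite cardF predn_exp2 dvdn_mull.
have [s [_ _ sE s_pow]] := Xn_sub1_split dvd_qp1.
have : w \in s by rewrite -root_prod_XsubC -sE rootE !hornerE w1 subrr.
by move/s_pow; rewrite cardF predn_exp2 mulnK.
Qed.

(* For z with z^(q+1) = 1, a unit c0 with c0^(q-1) = -z satisfies
   bar c0 = -z c0, which makes c0 (X - z) self-conjugate-reciprocal. *)
Lemma unit_circle_factor (z : F) : z ^+ q.+1 = 1 ->
  exists2 c0 : F, c0 != 0 & bar c0 = - z * c0.
Proof.
move=> z1; have [c0 c00 c0E] : exists2 c0 : F, c0 != 0 & c0 ^+ q.-1 = - z.
  apply: qm1_power_onto; rewrite -mulN1r exprMn z1 mulr1 exprSr.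
  by have := qconjN 1; rewrite /qconj expr1n => ->; rewrite mulrNN mulr1.
by exists c0; rewrite // /qconj -{1}(prednK (ltnW q_gt1)) exprSr c0E.
Qed.

Lemma coef_conj_recip (L : {poly F}) k :
  (conj_recip q L)`_k = if (k < size L)%N then bar L`_((size L).-1 - k) else 0.
Proof. by rewrite /conj_recip coef_poly. Qed.

Lemma coef_XsubC_mul (z : F) (M : {poly F}) j :
  (('X - z%:P) * M)`_j = (if j == 0%N then 0 else M`_j.-1) - z * M`_j.
Proof. by rewrite mulrBl coefB coefXM coefCM. Qed.

Lemma size_XsubC_mul (c0 z : F) (M : {poly F}) : c0 != 0 -> M != 0 ->
  size (c0 *: (('X - z%:P) * M)) = (size M).+1.
Proof. by move=> c00 M0; rewrite size_scale // size_mul ?polyXsubC_eq0 // size_XsubC. Qed.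

Lemma root_XsubC_mul (c0 z y : F) (M : {poly F}) : c0 != 0 ->
  root (c0 *: (('X - z%:P) * M)) y = (y == z) || root M y.
Proof.
move=> c00; rewrite !rootE hornerZ hornerM hornerXsubC !mulf_eq0 (negbTE c00).
by rewrite subr_eq0.
Qed.

(* For z on the unit circle (bar z = z^-1) and bar c0 = -z c0, the factor
   c0 (X - z) is itself conjugate-reciprocal, so it commutes with tilde. *)
Lemma conj_recip_XsubC_mul (c0 z : F) (M : {poly F}) : c0 != 0 -> M != 0 ->
  bar c0 = - z * c0 -> z ^+ q.+1 = 1 ->
  conj_recip q (c0 *: (('X - z%:P) * M)) = c0 *: (('X - z%:P) * conj_recip q M).
Proof.
move=> c00 M0 c0E z1.
have z0 : z != 0 by apply: contra_eq_neq z1 => ->; rewrite expr0n eq_sym oner_eq0.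
have bar_z : bar z = z^-1 by apply: (mulIf z0); rewrite /qconj -exprSr z1 mulVf.
have M_gt0 : (0 < size M)%N by rewrite size_poly_gt0.
apply/polyP => i; rewrite coef_conj_recip size_XsubC_mul // !coefZ !coef_XsubC_mul.
rewrite !coef_conj_recip /=; set n := size M.
have Mn : M`_n = 0 by rewrite nth_default.
case: (ltngtP i n) => [ilt | igt | ->].
- have -> : (i < n.+1)%N by lia.
  have -> : (n - i == 0)%N = false by apply/negbTE; rewrite subn_eq0 -ltnNge.
  case: i ilt => [|i] ilt /=.
    by rewrite !subn0 Mn qconjM qconjB qconjM qconj0 c0E; ring.
  rewrite (leq_trans _ ilt) //.
  have -> : (n - i.+1).-1 = (n.-1 - i.+1)%N by lia.
  have -> : (n - i.+1 = n.-1 - i)%N by lia.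
  by rewrite qconjM qconjB qconjM c0E bar_z; field.
- have -> : (i < n.+1)%N = false by lia.
  case: i igt => [|i] igt //=.
  have -> : (i < n)%N = false by lia.
  by rewrite !mulr0 subrr mulr0.
- have -> : (n < n.+1)%N by lia.
  have -> : (n == 0%N) = false by lia.
  have -> : (n.-1 < n)%N by lia.
  by rewrite !subnn eqxx qconjM qconjB qconjM qconj0 c0E bar_z; field.
Qed.

Definition scr_avoiding (s : seq F) (L : {poly F}) : bool :=
  (conj_recip q L == L) && all (fun z => ~~ root L z) s.

Definition scr_count (s : seq F) (t : nat) : nat := #|vecs_of_size t (scr_avoiding s)|.

(* Adding a point to s does not change N(s,0): constants have no roots. *)
Lemma scr_count_cons0 z s : scr_count (z :: s) 0 = scr_count s 0.
Proof.
apply: eq_card => c; rewrite !inE /scr_avoiding /=.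
have [sz|] := eqVneq (size (poly_of_vec c)) 1%N => //=.
suff -> : ~~ root (poly_of_vec c) z by [].
apply/negP => rz; have nz : poly_of_vec c != 0 by rewrite -size_poly_eq0 sz.
by have := root_size_gt1 nz rz; rewrite sz ltnn.
Qed.

(* Multiplication by c0 (X - z) is a bijection from the scr polynomials of
   degree t avoiding s onto those of degree t+1 avoiding s and vanishing at z. *)
Lemma card_scr_vanishing z s t : z ^+ q.+1 = 1 -> z \notin s ->
  #|vecs_of_size t.+1 (fun L => scr_avoiding s L && root L z)| = scr_count s t.
Proof.
move=> z1 zs; have [c0 c00 c0E] := unit_circle_factor z1.
pose h M := c0 *: (('X - z%:P) * M).
have h_inj : injective h.
  by move=> M1 M2 /(scalerI c00); apply: mulfI; rewrite polyXsubC_eq0.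
have all_h M : all (fun y => ~~ root (h M) y) s = all (fun y => ~~ root M y) s.
  apply: eq_in_all => y ys; rewrite root_XsubC_mul //.
  by have -> : (y == z) = false by apply/negbTE; apply: contraNneq zs => <-.
symmetry; apply: (card_vecs_of_size_bij h_inj).
  move=> M sM /andP [/eqP crM aM]; have M0 : M != 0 by rewrite -size_poly_eq0 sM.
  split; first by rewrite size_XsubC_mul // sM.
  rewrite /scr_avoiding /h conj_recip_XsubC_mul // crM eqxx -/(h M) all_h aM /=.
  by rewrite root_XsubC_mul // eqxx.
move=> L sL /andP [/andP [/eqP crL aL] rL].
have [M0 LE] := factor_theorem _ _ rL.
pose M := c0^-1 *: M0.
have hM : h M = L by rewrite /h -scalerAr scalerA divff // scale1r mulrC LE.
have M_neq0 : M != 0.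
  by apply: contra_eq_neq sL => M_eq0; rewrite -hM M_eq0 /h mulr0 scaler0 size_poly0.
exists M => //; split; first by apply/eq_add_S; rewrite -sL -hM size_XsubC_mul.
rewrite /scr_avoiding -all_h hM aL andbT; apply/eqP/h_inj.
by rewrite hM -{1}crL -hM /h conj_recip_XsubC_mul.
Qed.

(* Splitting according to whether z is a root: N(s,t+1) = N(z::s,t+1) + N(s,t). *)
Lemma scr_count_step z s t : z ^+ q.+1 = 1 -> z \notin s ->
  scr_count s t.+1 = (scr_count (z :: s) t.+1 + scr_count s t)%N.
Proof.
move=> z1 zs; rewrite -(card_scr_vanishing t z1 zs).
rewrite /scr_count -(cardID [set c | root (poly_of_vec c) z]) addnC.
by congr (_ + _)%N; apply: eq_card => c; rewrite !inE /scr_avoiding /=;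
  case: (root _ z); rewrite ?andbT ?andbF.
Qed.

Lemma scr_count_incl_excl s t : uniq s -> {in s, forall z, z ^+ q.+1 = 1} ->
  (scr_count s t)%:Z =
    \sum_(i < t.+1) (-1) ^+ i * ('C(size s, i))%:Z * (scr_count [::] (t - i))%:Z.
Proof.
elim: s t => [|z s IH] t.
  move=> _ _; rewrite big_ord_recl big1 ?addr0 ?subn0 ?mul1r // => i _.
  by rewrite bin0n mulr0 mul0r.
rewrite cons_uniq => /andP [zs s_uniq] s_circle.
have z1 : z ^+ q.+1 = 1 by apply: s_circle; rewrite mem_head.
have {}s_circle : {in s, forall y, y ^+ q.+1 = 1}.
  by move=> y ys; apply: s_circle; rewrite inE ys orbT.
case: t => [|t]; first by rewrite scr_count_cons0 IH // !big_ord1 !bin0.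
have -> : (scr_count (z :: s) t.+1)%:Z = (scr_count s t.+1)%:Z - (scr_count s t)%:Z.
  by rewrite (scr_count_step t z1 zs) PoszD addrK.
rewrite !IH // big_ord_recl [in RHS]big_ord_recl !bin0 /= -addrA; congr (_ + _).
rewrite -sumrB; apply: eq_bigr => i _.
by rewrite /bump /= !add1n subSS binS PoszD exprS; ring.
Qed.

Definition palindromic t (c : {ffun 'I_t.+1 -> F}) : bool :=
  [forall i, bar (c (rev_ord i)) == c i].

Lemma conj_recip_vecE t (c : {ffun 'I_t.+1 -> F}) : size (poly_of_vec c) = t.+1 ->
  (conj_recip q (poly_of_vec c) == poly_of_vec c) = palindromic c.
Proof.
move=> sz; have rev_inord (i : 'I_t.+1) : inord (t - i) = rev_ord i.
  by apply: val_inj; rewrite /= inordK; lia.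
apply/eqP/forallP => [crc i | pal].
  have := congr1 (fun p : {poly F} => p`_i) crc; rewrite /= coef_conj_recip sz ltn_ord.
  by rewrite /= !coef_poly ltn_ord ltnS leq_subr rev_inord inord_val => ->.
apply/polyP => k; rewrite coef_conj_recip sz /=; case: ltnP => kt.
  rewrite !coef_poly ltnS leq_subr kt (rev_inord (Ordinal kt)).
  rewrite (eqP (pal (Ordinal kt))) (_ : inord k = Ordinal kt) //.
  by apply: val_inj; rewrite /= inordK.
by rewrite nth_default // (leq_trans (size_poly _ _)).
Qed.

Lemma mem_scr0 t (c : {ffun 'I_t.+1 -> F}) :
  (c \in vecs_of_size t (scr_avoiding [::])) = (c ord_max != 0) && palindromic c.
Proof.
rewrite inE /scr_avoiding andbT -size_poly_of_vec.
by case: eqP => //= sz; rewrite conj_recip_vecE.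
Qed.

(* A palindromic vector with nonzero ends is determined by its first half:
   c_0 is nonzero, c_i is free for 2i < t, fixed by bar for 2i = t, and the
   remaining coordinates are recorded as 0. *)
Definition half_range t (i : 'I_t.+1) : pred F := [pred x |
  ((i != 0 :> nat) || (x != 0)) &&
  (if (2 * i < t)%N then true else if (2 * i == t)%N then bar x == x else x == 0)].

Definition pal_half t (c : {ffun 'I_t.+1 -> F}) : {ffun 'I_t.+1 -> F} :=
  [ffun i : 'I_t.+1 => if (2 * i <= t)%N then c i else 0].

Definition pal_fold t (g : {ffun 'I_t.+1 -> F}) : {ffun 'I_t.+1 -> F} :=
  [ffun i : 'I_t.+1 => if (2 * i <= t)%N then g i else bar (g (rev_ord i))].

Lemma val_rev_ord t (i : 'I_t.+1) : nat_of_ord (rev_ord i) = (t - i)%N.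
Proof. by rewrite /= subSS. Qed.

Lemma pal_half_family t (c : {ffun 'I_t.+1 -> F}) :
  c ord_max != 0 -> palindromic c -> pal_half c \in family (@half_range t).
Proof.
move=> cmax /forallP pal.
have c_first (i : 'I_t.+1) : i = 0%N :> nat -> c i != 0.
  move=> i0; have -> : i = rev_ord ord_max by apply: val_inj => /=; lia.
  by rewrite -(eqP (pal _)) qconj_eq0 rev_ordK.
apply/familyP => i; rewrite !inE ffunE.
case: (ltngtP (2 * i) t) => h2i; rewrite /= ?andbT.
- by case: eqP => [i0 | //]; rewrite c_first.
- by rewrite eqxx andbT orbF; apply/eqP => i0; move: h2i; rewrite i0.
- have rev_i : rev_ord i = i by apply: val_inj => /=; lia.
  have := pal i; rewrite rev_i => ->; rewrite andbT.
  by case: eqP => [i0 | //]; rewrite c_first.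
Qed.

Lemma pal_halfK t (c : {ffun 'I_t.+1 -> F}) : palindromic c -> pal_fold (pal_half c) = c.
Proof.
move=> /forallP pal; apply/ffunP => i; rewrite !ffunE.
case: leqP => h2i //; rewrite val_rev_ord ifT; last by lia.
exact/eqP/pal.
Qed.

Lemma pal_fold_scr0 t (g : {ffun 'I_t.+1 -> F}) : g \in family (@half_range t) ->
  (pal_fold g ord_max != 0) && palindromic (pal_fold g).
Proof.
move=> /familyP g_half.
have g_first (i : 'I_t.+1) : i = 0%N :> nat -> g i != 0.
  by move=> i0; have := g_half i; rewrite inE i0 /= => /andP [].
apply/andP; split.
  rewrite ffunE; case: leqP => ht; last by rewrite qconj_eq0 g_first ?val_rev_ord ?subnn.
  by apply: g_first; move: ht => /=; lia.
apply/forallP => i; rewrite !ffunE rev_ordK val_rev_ord.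
have := g_half i; rewrite inE.
case: (ltngtP (2 * i) t) => h2i /andP [_ gi].
- by rewrite ifN ?qconjK //; lia.
- by rewrite ifT //; lia.
- have rev_i : rev_ord i = i by apply: val_inj => /=; lia.
  by rewrite !ifT ?rev_i //; lia.
Qed.

Lemma pal_foldK t (g : {ffun 'I_t.+1 -> F}) : g \in family (@half_range t) ->
  pal_half (pal_fold g) = g.
Proof.
move=> /familyP g_half; apply/ffunP => i; rewrite !ffunE.
case: leqP => // h2i; have := g_half i; rewrite inE.
by rewrite ifN ?ifN; [case/andP => _ /eqP | lia | lia].
Qed.

Lemma card_scr0_family t :
  scr_count [::] t = #|(family (@half_range t) : simpl_pred {ffun 'I_t.+1 -> F})|.
Proof.
rewrite /scr_count.
have -> : vecs_of_size t (scr_avoiding [::]) = @pal_fold t @: family (@half_range t).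
  apply/setP => c; rewrite mem_scr0; apply/idP/imsetP => [/andP [cmax pal] | [g g_half ->]].
    by exists (pal_half c); rewrite ?pal_half_family ?pal_halfK.
  exact: pal_fold_scr0.
by apply: card_in_imset => g1 g2 g1F g2F e; rewrite -(pal_foldK g1F) e pal_foldK.
Qed.

Lemma card_half_range t (i : 'I_t.+1) : #|half_range i| =
  if i == 0%N :> nat then (if t == 0%N then q.-1 else (q ^ 2).-1)
  else (q ^ ((2 * i < t : nat) + (2 * i <= t : nat)))%N.
Proof.
rewrite /half_range; case: eqP => [-> | /eqP i0]; rewrite /= ?muln0.
  case: t i => [|t] i /=.
    by rewrite -card_qconj_fixed_units; apply: eq_card => x; rewrite !inE.
  by rewrite -cardF -(cardC1 (0 : F)); apply: eq_card => x; rewrite !inE andbT.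
case: (ltngtP (2 * i) t) => h2i /=.
- by rewrite addn1 -cardF; apply: eq_card => x; rewrite !inE ?i0.
- by rewrite addn0 expn0 -(card1 (0 : F)); apply: eq_card => x; rewrite !inE ?i0.
- rewrite add0n expn1 -[X in _ = X]card_qconj_fixed.
  by apply: eq_card => x; rewrite !inE ?i0.
Qed.

Lemma half_index_count k :
  (\sum_(i < k.+1) ((2 * i.+1 < k.+1 : nat) + (2 * i.+1 <= k.+1 : nat)))%N = k.
Proof.
have count_lt n t : (\sum_(i < n) (2 * i.+1 < t : nat))%N = minn n (t.-1 %/ 2).
  elim: n => [|n IH]; first by rewrite big_ord0 min0n.
  by rewrite big_ord_recr IH; case: (ltnP (2 * n.+1) t) => h /=; rewrite ?addn0 ?addn1; lia.
have count_le n t : (\sum_(i < n) (2 * i.+1 <= t : nat))%N = minn n (t %/ 2).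
  elim: n => [|n IH]; first by rewrite big_ord0 min0n.
  by rewrite big_ord_recr IH; case: (leqP (2 * n.+1) t) => h /=; rewrite ?addn0 ?addn1; lia.
by rewrite big_split /= count_lt count_le; lia.
Qed.

Lemma scr_count_nil t :
  scr_count [::] t = if t is k.+1 then ((q ^ 2).-1 * q ^ k)%N else q.-1.
Proof.
rewrite card_scr0_family card_family foldrE big_image big_ord_recl card_half_range /=.
rewrite (eq_bigr (fun i : 'I_t => q ^ ((2 * i.+1 < t : nat) + (2 * i.+1 <= t : nat))))%N;
  last by move=> i _; rewrite card_half_range.
case: t => [|k]; first by rewrite big_ord0 muln1.
by rewrite -expn_sum half_index_count.
Qed.

End ConjugateReciprocal.

Unset Implicit Arguments.

(* Lemma 2.5: l(t,0) = N(s,t) for the list s of the m roots of X^m - 1, which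
   lie on the unit circle since m divides q + 1; expand by inclusion-exclusion. *)
Theorem lemma2p5 (F : finFieldType) (q d t : nat)
  (hq : exists p k : nat, [/\ prime p, (0 < k)%N & q = (p ^ k)%N])
  (hF : #|F| = (q ^ 2)%N)
  (hd0 : (0 < d)%N) (hd : (d %| q.+1)%N)
  (ht : (t < q.+1 %/ d)%N) :
  (count_l F q (q.+1 %/ d) t)%:Z =
    ((q ^ 2)%:Z - 1) *
      \sum_(i < t) (-1) ^+ i * ('C(q.+1 %/ d, i))%:Z * (q ^ (t - i - 1))%:Z
    + (-1) ^+ t * (q%:Z - 1) * ('C(q.+1 %/ d, t))%:Z.
Proof.
set m := (q.+1 %/ d)%N.
have q_gt1 := q_gt1 hq.
have m_dvd : (m %| #|F|.-1)%N by rewrite hF predn_exp2 dvdn_mull // dvdn_div.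
have [s [s_uniq s_size sE _]] := Xn_sub1_split m_dvd.
have s_circle : {in s, forall z, z ^+ q.+1 = 1}.
  move=> z zs; have : root ('X^m - 1) z by rewrite sE root_prod_XsubC.
  rewrite rootE !hornerE subr_eq0 => /eqP zm.
  by rewrite -(divnK hd) -/m exprM zm expr1n.
have -> : count_l F q m t = scr_count q s t.
  by apply: eq_card => c; rewrite !inE /scr_avoiding sE coprimep_prod_XsubC andbA.
rewrite (scr_count_incl_excl hq hF t s_uniq s_circle) s_size big_ord_recr /= subnn.
rewrite mulr_sumr; congr (_ + _).
  apply: eq_bigr => i _; have i_lt := ltn_ord i.
  rewrite (scr_count_nil hq hF) (_ : (t - i = (t - i - 1).+1)%N); last by lia.
  by rewrite PoszM predn_int ?subn1 ?expn_gt0 ?(ltnW q_gt1) //=; ring.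
by rewrite (scr_count_nil hq hF) predn_int; [ring | lia].
Qed.
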